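(* Let $t_1<\tau$ be fixed independently of $z$, and for each $z$ let $\mathbf y(t)$ and $\mathbf x_h(t)$ satisfy $$\frac{d}{dt}\mathbf y=\mathbf A\mathbf y+h(\mathbf y)+\mathbf e_{\mathbf y},\qquad \frac{d}{dt}\mathbf x_h=\mathbf A\mathbf x_h+h(\mathbf x_h),\qquad \mathbf x_h(t_1)=\mathbf y(t_1),$$ where $\sup_{t\in[t_1,\tau]}\|\mathbf e_{\mathbf y}(t)\|=O(z^{-1})$, and $h:\mathbb R^4\to\mathbb R^4$ is such that for all $\mathbf x_1,\mathbf x_2$, $h(\mathbf x_1)-h(\mathbf x_2)=\mathbf L_h(\mathbf x_1,\mathbf x_2)(\mathbf x_1-\mathbf x_2)$ for a $4\times4$ matrix $\mathbf L_h(\mathbf x_1,\mathbf x_2)$ whose entries satisfy $|[\mathbf L_h(\mathbf x_1,\mathbf x_2)]_{ij}|\le L_h$, with $L_h>0$ a constant independent of $z$. Then $$\sup_{t\in[t_1,\tau]}\|\mathbf y(t)-\mathbf x_h(t)\|=O(z^{-1}).$$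
   Context: $\mathbf A=\begin{bmatrix}-1&3z&z&z\\0&-3z&0&0\\0&2z&-z&0\\1&0&0&-z\end{bmatrix}$ for $z>0$. $O(z^{-1})$ means bounded by $Kz^{-1}$ with $K$ independent of $z$, for all sufficiently large $z$. *)

From Stdlib Require Import Reals Lra.
Open Scope R_scope.

(* Vectors of R^4 are functions nat -> R; only indices 0..3 are meaningful.
   Matrices are functions nat -> nat -> R, indices 0..3. *)
Definition vec := nat -> R.
Definition mat := nat -> nat -> R.

Definition vsub (a b : vec) : vec := fun i => a i - b i.

Definition matvec (M : mat) (v : vec) : vec :=
  fun i => sum_f_R0 (fun j => M i j * v j) 3.

Definition vnorm (v : vec) : R := sqrt (sum_f_R0 (fun i => v i ^ 2) 3).

Definition Amat (z : R) : mat := fun i j =>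
  match i, j with
  | 0, 0 => -1 | 0, 1 => 3 * z | 0, 2 => z | 0, 3 => z
  | 1, 1 => - (3 * z)
  | 2, 1 => 2 * z | 2, 2 => - z
  | 3, 0 => 1 | 3, 3 => - z
  | _, _ => 0
  end.

Definition cont_on (f : R -> R) (a b : R) : Prop :=
  forall t, a <= t <= b ->
  forall eps, 0 < eps -> exists delta, 0 < delta /\
    forall s, a <= s <= b -> Rabs (s - t) < delta -> Rabs (f s - f t) < eps.

(* The matrix A(z) has the left null vector ell = (1, 5/3, 1, 1), and on the
   coordinates d1, d2, d3 it acts as a damping of strength z (up to the single
   bounded entry coupling d3 to d0).  Hence for d = y - x_h the Lyapunov function
     V = (ell . d)^2 + z (2 d1^2 + d2^2 + d3^2)
   satisfies V' <= alpha V + 8 |e_y|^2 with alpha depending only on L_h: the stiff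
   part of A only contributes a dissipation -z^2 (8 d1^2 + d2^2 + d3^2), which
   absorbs every cross term of size z coming from h and e_y.  Gronwall's lemma
   then gives V = O(z^-2) uniformly on [t1, tau], and |d|^2 <= 12 V. *)

From Stdlib Require Import Reals Lra Lia.
Open Scope R_scope.

Definition clamp (a b s : R) : R := Rmax a (Rmin b s).

Lemma clamp_id (a b s : R) : a <= s <= b -> clamp a b s = s.
Proof. intros; unfold clamp, Rmax, Rmin; repeat destruct Rle_dec; lra. Qed.

Lemma clamp_in (a b s : R) : a <= b -> a <= clamp a b s <= b.
Proof. intros; unfold clamp, Rmax, Rmin; repeat destruct Rle_dec; lra. Qed.

Lemma Rabs_clamp_sub_le (a b s t : R) :
  a <= b -> Rabs (clamp a b s - clamp a b t) <= Rabs (s - t).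
Proof.
  intros; unfold clamp, Rmax, Rmin; repeat destruct Rle_dec;
  unfold Rabs; repeat destruct Rcase_abs; lra.
Qed.

Lemma continuity_pt_clamp_comp (f : R -> R) (a b c : R) :
  a <= b -> cont_on f a b -> continuity_pt (fun s => f (clamp a b s)) c.
Proof.
  intros Hab Hf eps Heps.
  destruct (Hf (clamp a b c) (clamp_in a b c Hab) eps Heps) as (delta & Hdelta & Hclose).
  exists delta; split; [exact Hdelta |].
  intros s [_ Hs]; simpl in *; unfold R_dist in *.
  apply Hclose; [apply clamp_in; exact Hab |].
  eapply Rle_lt_trans; [apply Rabs_clamp_sub_le; exact Hab | exact Hs].
Qed.

Lemma derivable_pt_lim_clamp_comp (f : R -> R) (a b c l : R) :
  a < c < b -> derivable_pt_lim f c l -> derivable_pt_lim (fun s => f (clamp a b s)) c l.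
Proof.
  intros Hc; apply derivable_pt_lim_locally_ext with (a := a) (b := b); [exact Hc |].
  intros s Hs; rewrite clamp_id by lra; reflexivity.
Qed.

Lemma continuity_pt_sq (f : R -> R) (c : R) :
  continuity_pt f c -> continuity_pt (fun s => f s ^ 2) c.
Proof.
  intros Hf; apply (continuity_pt_comp f (fun x => x ^ 2)); [exact Hf |].
  apply derivable_continuous_pt, derivable_pt_pow.
Qed.

Lemma derivable_pt_lim_sq (f : R -> R) (c l : R) :
  derivable_pt_lim f c l -> derivable_pt_lim (fun s => f s ^ 2) c (2 * f c * l).
Proof.
  intros Hf.
  pose proof (derivable_pt_lim_comp f (fun x => x ^ 2) c l _ Hf (derivable_pt_lim_pow (f c) 2)) as H.
  replace (2 * f c * l) with (INR 2 * f c ^ Nat.pred 2 * l) by (simpl; ring).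
  exact H.
Qed.

Lemma derivable_pt_lim_exp_affine (k a x : R) :
  derivable_pt_lim (fun s => exp (k * (s - a))) x (k * exp (k * (x - a))).
Proof.
  assert (Hlin : derivable_pt_lim (fun s => k * (s - a)) x k).
  { pose proof (derivable_pt_lim_scal (fun s => s - a) k x (1 - 0)
      (derivable_pt_lim_minus id (fct_cte a) x 1 0
         (derivable_pt_lim_id x) (derivable_pt_lim_const a x))) as H.
    rewrite Rminus_0_r, Rmult_1_r in H; exact H. }
  rewrite Rmult_comm.
  exact (derivable_pt_lim_comp (fun s => k * (s - a)) exp x k _ Hlin
           (derivable_pt_lim_exp _)).
Qed.

Lemma exp_le_compat (x y : R) : x <= y -> exp x <= exp y.
Proof.
  intros Hxy; destruct (Rle_lt_or_eq_dec x y Hxy) as [Hlt | ->];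
    [apply Rlt_le, exp_increasing, Hlt | apply Rle_refl].
Qed.

Lemma le_left_of_derivable_pt_lim_nonpos (G G' : R -> R) (a b : R) :
  (forall c, a <= c <= b -> continuity_pt G c) ->
  (forall t, a < t < b -> derivable_pt_lim G t (G' t)) ->
  (forall t, a < t < b -> G' t <= 0) ->
  forall t, a <= t <= b -> G t <= G a.
Proof.
  intros Hcont Hder Hneg t Ht.
  destruct (Req_dec t a) as [-> | Hta]; [lra |].
  assert (HG : forall c, a < c < t -> derivable_pt G c)
    by (intros c Hc; exists (G' c); apply Hder; lra).
  assert (Hid : forall c, a < c < t -> derivable_pt id c)
    by (intros c _; apply derivable_pt_id).
  destruct (MVT G id a t HG Hid) as (c & Hc & Hmvt).
  - lra.
  - intros c Hc; apply Hcont; lra.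
  - intros c _; apply derivable_continuous_pt, derivable_pt_id.
  - rewrite (derive_pt_eq_0 G c (G' c) (HG c Hc)) in Hmvt by (apply Hder; lra).
    rewrite (derive_pt_eq_0 id c 1 (Hid c Hc)) in Hmvt by apply derivable_pt_lim_id.
    unfold id in Hmvt.
    assert (G' c <= 0) by (apply Hneg; lra).
    nra.
Qed.

Lemma gronwall_linear (W W' : R -> R) (a b al be : R) : 0 < al ->
  (forall c, a <= c <= b -> continuity_pt W c) ->
  (forall t, a < t < b -> derivable_pt_lim W t (W' t)) ->
  (forall t, a < t < b -> W' t <= al * W t + be) ->
  forall t, a <= t <= b -> W t + be / al <= (W a + be / al) * exp (al * (t - a)).
Proof.
  intros Hal Hcont Hder Hbound t Ht.
  set (G := fun s => (W s + be / al) * exp (- al * (s - a))).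
  assert (HGt : G t <= G a).
  { apply (le_left_of_derivable_pt_lim_nonpos G
             (fun s => (W' s - al * W s - be) * exp (- al * (s - a))) a b); [| | | exact Ht].
    - intros c Hc; unfold G; apply continuity_pt_mult.
      + apply continuity_pt_plus; [apply Hcont, Hc | apply continuity_pt_const; intros ? ?; reflexivity].
      + apply derivable_continuous_pt; eexists; apply derivable_pt_lim_exp_affine.
    - intros s Hs.
      replace ((W' s - al * W s - be) * exp (- al * (s - a)))
        with ((W' s + 0) * exp (- al * (s - a)) + (W s + be / al) * (- al * exp (- al * (s - a))))
        by (field; lra).
      apply (derivable_pt_lim_mult (fun s => W s + be / al) (fun s => exp (- al * (s - a))));
        [apply derivable_pt_lim_plus |].
      + apply Hder, Hs.
      + apply derivable_pt_lim_const.
      + apply derivable_pt_lim_exp_affine.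
    - intros s Hs.
      assert (W' s - al * W s - be <= 0) by (pose proof (Hbound s Hs); lra).
      pose proof (exp_pos (- al * (s - a))); nra. }
  unfold G in HGt.
  replace (a - a) with 0 in HGt by ring.
  rewrite Rmult_0_r, exp_0, Rmult_1_r in HGt.
  replace (W t + be / al)
    with ((W t + be / al) * exp (- al * (t - a)) * exp (al * (t - a))).
  - apply Rmult_le_compat_r; [apply Rlt_le, exp_pos | exact HGt].
  - rewrite Rmult_assoc, <- exp_plus.
    replace (- al * (t - a) + al * (t - a)) with 0 by ring.
    rewrite exp_0; ring.
Qed.

Lemma Rabs_sum4_le (a b c d : R) : Rabs (a + b + c + d) <= Rabs a + Rabs b + Rabs c + Rabs d.
Proof.
  pose proof (Rabs_triang (a + b + c) d); pose proof (Rabs_triang (a + b) c);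
  pose proof (Rabs_triang a b); lra.
Qed.

Lemma Rmult_le_Rabs_bound (x y B : R) : Rabs y <= B -> x * y <= Rabs x * B.
Proof.
  intros Hy; apply Rle_trans with (Rabs (x * y)); [apply Rle_abs |].
  rewrite Rabs_mult; apply Rmult_le_compat_l; [apply Rabs_pos | exact Hy].
Qed.

Definition vsq (v : vec) : R := sum_f_R0 (fun i => v i ^ 2) 3.

Lemma vsq_nonneg (v : vec) : 0 <= vsq v.
Proof.
  unfold vsq; cbn [sum_f_R0]; repeat apply Rplus_le_le_0_compat; apply pow2_ge_0.
Qed.

Lemma vsq_le_of_vnorm_le (v : vec) (c : R) : vnorm v <= c -> vsq v <= c ^ 2.
Proof.
  intros Hv; change (sqrt (vsq v) <= c) in Hv.
  pose proof (sqrt_pos (vsq v)).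
  rewrite <- (pow2_sqrt (vsq v)) by apply vsq_nonneg.
  apply pow_incr; lra.
Qed.

Lemma vnorm_le_of_vsq_le (v : vec) (c : R) : 0 <= c -> vsq v <= c ^ 2 -> vnorm v <= c.
Proof.
  intros Hc Hv; change (sqrt (vsq v) <= c).
  rewrite <- (sqrt_pow2 c Hc); apply sqrt_le_1_alt; exact Hv.
Qed.

Lemma matvec_vsub (M : mat) (a b : vec) (i : nat) :
  matvec M a i - matvec M b i = matvec M (vsub a b) i.
Proof. unfold matvec, vsub; cbn [sum_f_R0]; ring. Qed.

Lemma Rabs_matvec_le (M : mat) (v : vec) (i : nat) (B : R) :
  (forall j, (j < 4)%nat -> Rabs (M i j) <= B) ->
  Rabs (matvec M v i) <= B * sum_f_R0 (fun j => Rabs (v j)) 3.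
Proof.
  intros HM; unfold matvec; cbn [sum_f_R0].
  assert (T : forall j, (j < 4)%nat -> Rabs (M i j * v j) <= B * Rabs (v j))
    by (intros j Hj; rewrite Rabs_mult; apply Rmult_le_compat_r; [apply Rabs_pos | auto]).
  pose proof (T 0%nat ltac:(lia)); pose proof (T 1%nat ltac:(lia));
  pose proof (T 2%nat ltac:(lia)); pose proof (T 3%nat ltac:(lia)).
  pose proof (Rabs_sum4_le (M i 0%nat * v 0%nat) (M i 1%nat * v 1%nat)
                (M i 2%nat * v 2%nat) (M i 3%nat * v 3%nat)).
  lra.
Qed.

Definition ell (v : vec) : R := v 0%nat + 5/3 * v 1%nat + v 2%nat + v 3%nat.

Definition lyap (z : R) (d : vec) : R :=
  ell d ^ 2 + z * (2 * d 1%nat ^ 2 + d 2%nat ^ 2 + d 3%nat ^ 2).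

Definition lyap_deriv (z : R) (d v : vec) : R :=
  2 * ell d * ell v
  + z * (4 * d 1%nat * v 1%nat + 2 * d 2%nat * v 2%nat + 2 * d 3%nat * v 3%nat).

Definition lyap_rate (M : R) : R := 3 + 100 * M + 10 * M ^ 2.

Lemma lyap_rate_pos (M : R) : 0 <= M -> 0 < lyap_rate M.
Proof. intros HM; unfold lyap_rate; nra. Qed.

Lemma ell_Amat (z : R) (d : vec) : ell (matvec (Amat z) d) = 0.
Proof. unfold ell, matvec; cbn [sum_f_R0]; unfold Amat; field. Qed.

Lemma ell_sq_le (v : vec) : ell v ^ 2 <= 6 * vsq v.
Proof.
  unfold ell, vsq; cbn [sum_f_R0].
  set (a := v 0%nat); set (b := v 1%nat); set (c := v 2%nat); set (d := v 3%nat).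
  assert (0 <= (5/3 * a - b) ^ 2 + (a - c) ^ 2 + (a - d) ^ 2
               + (5/3 * c - b) ^ 2 + (5/3 * d - b) ^ 2 + (c - d) ^ 2)
    by (repeat apply Rplus_le_le_0_compat; apply pow2_ge_0).
  nra.
Qed.

Lemma Rabs_ell_le (v : vec) :
  Rabs (ell v) <= Rabs (v 0%nat) + 5/3 * Rabs (v 1%nat) + Rabs (v 2%nat) + Rabs (v 3%nat).
Proof.
  unfold ell; rewrite <- (Rabs_right (5/3)) at 2 by lra; rewrite <- Rabs_mult.
  apply Rabs_sum4_le.
Qed.

Lemma sum_Rabs_le_ell (d : vec) :
  sum_f_R0 (fun j => Rabs (d j)) 3
  <= Rabs (ell d) + 3 * (Rabs (d 1%nat) + Rabs (d 2%nat) + Rabs (d 3%nat)).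
Proof.
  cbn [sum_f_R0].
  replace (d 0%nat) with (ell d + (- (5/3) * d 1%nat + - d 2%nat + - d 3%nat)) at 1
    by (unfold ell; field).
  pose proof (Rabs_triang (ell d) (- (5/3) * d 1%nat + - d 2%nat + - d 3%nat)).
  pose proof (Rabs_triang (- (5/3) * d 1%nat + - d 2%nat) (- d 3%nat)).
  pose proof (Rabs_triang (- (5/3) * d 1%nat) (- d 2%nat)).
  rewrite Rabs_mult, !Rabs_Ropp, (Rabs_right (5/3)) in * by lra.
  pose proof (Rabs_pos (d 1%nat)); pose proof (Rabs_pos (d 2%nat)); pose proof (Rabs_pos (d 3%nat)).
  lra.
Qed.

Lemma lyap_deriv_Amat_le (z : R) (d : vec) : 0 <= z ->
  lyap_deriv z d (matvec (Amat z) d)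
  <= 2 * lyap z d - z ^ 2 * (8 * d 1%nat ^ 2 + d 2%nat ^ 2 + d 3%nat ^ 2).
Proof.
  intros Hz.
  unfold lyap_deriv; rewrite ell_Amat.
  unfold lyap, matvec; cbn [sum_f_R0]; unfold Amat.
  assert (Hd0 : d 0%nat = ell d - 5/3 * d 1%nat - d 2%nat - d 3%nat)
    by (unfold ell; ring).
  rewrite Hd0.
  set (u := ell d); set (d1 := d 1%nat); set (d2 := d 2%nat); set (d3 := d 3%nat).
  assert (0 <= (2 * z * d1 - z * d2) ^ 2) by apply pow2_ge_0.
  assert (0 <= (z * d3 - u) ^ 2) by apply pow2_ge_0.
  assert (0 <= z * (d1 + d3) ^ 2) by (apply Rmult_le_pos; [lra | apply pow2_ge_0]).
  assert (0 <= z * (d2 + d3) ^ 2) by (apply Rmult_le_pos; [lra | apply pow2_ge_0]).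
  assert (0 <= z * d1 ^ 2) by (apply Rmult_le_pos; [lra | apply pow2_ge_0]).
  nra.
Qed.

Lemma lyap_deriv_forcing_le (z : R) (d e : vec) : 0 <= z ->
  lyap_deriv z d e
  <= lyap z d + z ^ 2 * (4 * d 1%nat ^ 2 + d 2%nat ^ 2 / 2 + d 3%nat ^ 2 / 2) + 8 * vsq e.
Proof.
  intros Hz.
  assert (He := ell_sq_le e).
  assert (0 <= (ell d - ell e) ^ 2) by apply pow2_ge_0.
  unfold lyap_deriv, lyap, vsq in *; cbn [sum_f_R0] in *.
  assert (0 <= (2 * z * d 1%nat - e 1%nat) ^ 2) by apply pow2_ge_0.
  assert (0 <= (z * d 2%nat - 2 * e 2%nat) ^ 2) by apply pow2_ge_0.
  assert (0 <= (z * d 3%nat - 2 * e 3%nat) ^ 2) by apply pow2_ge_0.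
  assert (0 <= z * (2 * d 1%nat ^ 2 + d 2%nat ^ 2 + d 3%nat ^ 2))
    by (apply Rmult_le_pos; [lra | nra]).
  nra.
Qed.

(* The core of [lyap_deriv_lipschitz_le], with U = |ell d| and Ai = |d i|: the
   cross terms z Ai M U go into the dissipation z^2 Ai^2, all others into V. *)
Lemma lyap_lipschitz_absorb (z M U A1 A2 A3 : R) :
  1 <= z -> 0 <= M -> 0 <= U -> 0 <= A1 -> 0 <= A2 -> 0 <= A3 ->
  2 * U * (14/3 * (M * (U + 3 * (A1 + A2 + A3))))
  + z * ((4 * A1 + 2 * A2 + 2 * A3) * (M * (U + 3 * (A1 + A2 + A3))))
  <= (100 * M + 10 * M ^ 2) * (U ^ 2 + z * (2 * A1 ^ 2 + A2 ^ 2 + A3 ^ 2))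
     + z ^ 2 * (4 * A1 ^ 2 + A2 ^ 2 / 2 + A3 ^ 2 / 2).
Proof.
  intros Hz HM HU HA1 HA2 HA3.
  assert (0 <= (2 * z * A1 - M * U) ^ 2) by apply pow2_ge_0.
  assert (0 <= (z * A2 - 2 * M * U) ^ 2) by apply pow2_ge_0.
  assert (0 <= (z * A3 - 2 * M * U) ^ 2) by apply pow2_ge_0.
  assert (0 <= M * (U - A1) ^ 2) by (apply Rmult_le_pos; [lra | apply pow2_ge_0]).
  assert (0 <= M * (U - A2) ^ 2) by (apply Rmult_le_pos; [lra | apply pow2_ge_0]).
  assert (0 <= M * (U - A3) ^ 2) by (apply Rmult_le_pos; [lra | apply pow2_ge_0]).
  assert (0 <= z * M * (A1 - A2) ^ 2) by (apply Rmult_le_pos; [nra | apply pow2_ge_0]).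
  assert (0 <= z * M * (A1 - A3) ^ 2) by (apply Rmult_le_pos; [nra | apply pow2_ge_0]).
  assert (0 <= z * M * (A2 - A3) ^ 2) by (apply Rmult_le_pos; [nra | apply pow2_ge_0]).
  assert (0 <= M * (z - 1) * (A1 ^ 2 + A2 ^ 2 + A3 ^ 2)) by (apply Rmult_le_pos; nra).
  assert (0 <= M * U ^ 2 /\ 0 <= M ^ 2 * U ^ 2) by (split; nra).
  assert (0 <= z * M * A1 ^ 2 /\ 0 <= z * M * A2 ^ 2 /\ 0 <= z * M * A3 ^ 2)
    by (repeat split; repeat apply Rmult_le_pos; try apply pow2_ge_0; lra).
  assert (0 <= z * M ^ 2 * (2 * A1 ^ 2 + A2 ^ 2 + A3 ^ 2)) by (apply Rmult_le_pos; nra).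
  lra.
Qed.

Lemma lyap_deriv_lipschitz_le (z M : R) (d r : vec) : 1 <= z -> 0 <= M ->
  (forall i, (i < 4)%nat -> Rabs (r i) <= M * sum_f_R0 (fun j => Rabs (d j)) 3) ->
  lyap_deriv z d r
  <= (100 * M + 10 * M ^ 2) * lyap z d
     + z ^ 2 * (4 * d 1%nat ^ 2 + d 2%nat ^ 2 / 2 + d 3%nat ^ 2 / 2).
Proof.
  intros Hz HM Hr.
  set (U := Rabs (ell d)).
  set (A1 := Rabs (d 1%nat)); set (A2 := Rabs (d 2%nat)); set (A3 := Rabs (d 3%nat)).
  assert (HU : 0 <= U) by apply Rabs_pos; assert (HA1 : 0 <= A1) by apply Rabs_pos.
  assert (HA2 : 0 <= A2) by apply Rabs_pos; assert (HA3 : 0 <= A3) by apply Rabs_pos.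
  set (N := M * (U + 3 * (A1 + A2 + A3))).
  assert (HN : forall i, (i < 4)%nat -> Rabs (r i) <= N).
  { intros i Hi; apply Rle_trans with (1 := Hr i Hi).
    apply Rmult_le_compat_l; [exact HM | apply sum_Rabs_le_ell]. }
  assert (Hell : Rabs (ell r) <= 14/3 * N).
  { pose proof (Rabs_ell_le r); pose proof (HN 0%nat ltac:(lia)); pose proof (HN 1%nat ltac:(lia));
    pose proof (HN 2%nat ltac:(lia)); pose proof (HN 3%nat ltac:(lia)); lra. }
  assert (Hlin : lyap_deriv z d r <= 2 * U * (14/3 * N) + z * ((4 * A1 + 2 * A2 + 2 * A3) * N)).
  { unfold lyap_deriv.
    pose proof (Rmult_le_Rabs_bound (ell d) (ell r) _ Hell) as B0.
    pose proof (Rmult_le_Rabs_bound (d 1%nat) (r 1%nat) _ (HN 1%nat ltac:(lia))) as B1.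
    pose proof (Rmult_le_Rabs_bound (d 2%nat) (r 2%nat) _ (HN 2%nat ltac:(lia))) as B2.
    pose proof (Rmult_le_Rabs_bound (d 3%nat) (r 3%nat) _ (HN 3%nat ltac:(lia))) as B3.
    fold U A1 A2 A3 in B0, B1, B2, B3. nra. }
  assert (Hsq : ell d ^ 2 = U ^ 2 /\ d 1%nat ^ 2 = A1 ^ 2 /\ d 2%nat ^ 2 = A2 ^ 2 /\ d 3%nat ^ 2 = A3 ^ 2)
    by (unfold U, A1, A2, A3; rewrite !pow2_abs; auto).
  unfold lyap; destruct Hsq as (-> & -> & -> & ->).
  pose proof (lyap_lipschitz_absorb z M U A1 A2 A3 Hz HM HU HA1 HA2 HA3).
  unfold N in Hlin; lra.
Qed.

Lemma lyap_deriv_le (z M : R) (d r e : vec) : 1 <= z -> 0 <= M ->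
  (forall i, (i < 4)%nat -> Rabs (r i) <= M * sum_f_R0 (fun j => Rabs (d j)) 3) ->
  lyap_deriv z d (fun i => matvec (Amat z) d i + r i + e i)
  <= lyap_rate M * lyap z d + 8 * vsq e.
Proof.
  intros Hz HM Hr.
  replace (lyap_deriv z d (fun i => matvec (Amat z) d i + r i + e i))
    with (lyap_deriv z d (matvec (Amat z) d) + lyap_deriv z d r + lyap_deriv z d e)
    by (unfold lyap_deriv, ell; ring).
  pose proof (lyap_deriv_Amat_le z d ltac:(lra)).
  pose proof (lyap_deriv_lipschitz_le z M d r Hz HM Hr).
  pose proof (lyap_deriv_forcing_le z d e ltac:(lra)).
  unfold lyap_rate; lra.
Qed.

Lemma vsq_le_lyap (z : R) (d : vec) : 1 <= z -> vsq d <= 12 * lyap z d.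
Proof.
  intros Hz; unfold vsq, lyap; cbn [sum_f_R0].
  assert (Hd0 : d 0%nat = ell d - 5/3 * d 1%nat - d 2%nat - d 3%nat) by (unfold ell; field).
  rewrite Hd0.
  set (u := ell d); set (d1 := d 1%nat); set (d2 := d 2%nat); set (d3 := d 3%nat).
  assert (0 <= (u + 5/3 * d1) ^ 2 + (u + d2) ^ 2 + (u + d3) ^ 2
               + (5/3 * d1 - d2) ^ 2 + (5/3 * d1 - d3) ^ 2 + (d2 - d3) ^ 2)
    by (repeat apply Rplus_le_le_0_compat; apply pow2_ge_0).
  assert (0 <= (z - 1) * (2 * d1 ^ 2 + d2 ^ 2 + d3 ^ 2))
    by (apply Rmult_le_pos; [lra | nra]).
  nra.
Qed.

Lemma continuity_pt_lyap (z c : R) (D : R -> vec) :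
  (forall i, (i < 4)%nat -> continuity_pt (fun s => D s i) c) ->
  continuity_pt (fun s => lyap z (D s)) c.
Proof.
  intros HD.
  assert (H0 := HD 0%nat ltac:(lia)); assert (H1 := HD 1%nat ltac:(lia));
  assert (H2 := HD 2%nat ltac:(lia)); assert (H3 := HD 3%nat ltac:(lia)).
  unfold lyap, ell.
  apply continuity_pt_plus; [apply continuity_pt_sq | apply continuity_pt_scal];
  repeat first [ apply continuity_pt_plus | apply continuity_pt_scal | apply continuity_pt_sq
               | assumption ].
Qed.

Lemma derivable_pt_lim_lyap (z c : R) (D : R -> vec) (v : vec) :
  (forall i, (i < 4)%nat -> derivable_pt_lim (fun s => D s i) c (v i)) ->
  derivable_pt_lim (fun s => lyap z (D s)) c (lyap_deriv z (D c) v).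
Proof.
  intros HD.
  assert (H0 := HD 0%nat ltac:(lia)); assert (H1 := HD 1%nat ltac:(lia));
  assert (H2 := HD 2%nat ltac:(lia)); assert (H3 := HD 3%nat ltac:(lia)).
  replace (lyap_deriv z (D c) v)
    with (2 * ell (D c) * ell v
          + z * (2 * (2 * D c 1%nat * v 1%nat) + 2 * D c 2%nat * v 2%nat
                 + 2 * D c 3%nat * v 3%nat))
    by (unfold lyap_deriv; ring).
  unfold lyap.
  apply derivable_pt_lim_plus; [apply derivable_pt_lim_sq | apply derivable_pt_lim_scal].
  - unfold ell.
    repeat first [ apply derivable_pt_lim_plus | apply derivable_pt_lim_scal | assumption ].
  - repeat first [ apply derivable_pt_lim_plus | apply derivable_pt_lim_scal
                 | apply derivable_pt_lim_sq | assumption ].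
Qed.

Section ErrorEstimate.

Variables (z t1 tau Lh eps : R) (h : vec -> vec) (Lmat : vec -> vec -> mat)
  (y xh e : R -> vec).

Hypothesis Hz : 1 <= z.
Hypothesis Ht1 : t1 <= tau.
Hypothesis HLh : 0 <= Lh.
Hypothesis HLmat : forall a b i j, (i < 4)%nat -> (j < 4)%nat -> Rabs (Lmat a b i j) <= Lh.
Hypothesis Hh : forall a b i, (i < 4)%nat -> h a i - h b i = matvec (Lmat a b) (vsub a b) i.
Hypothesis Hy_cont : forall i, (i < 4)%nat -> cont_on (fun s => y s i) t1 tau.
Hypothesis Hxh_cont : forall i, (i < 4)%nat -> cont_on (fun s => xh s i) t1 tau.
Hypothesis Hy_ode : forall t, t1 < t < tau -> forall i, (i < 4)%nat ->
  derivable_pt_lim (fun s => y s i) t (matvec (Amat z) (y t) i + h (y t) i + e t i).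
Hypothesis Hxh_ode : forall t, t1 < t < tau -> forall i, (i < 4)%nat ->
  derivable_pt_lim (fun s => xh s i) t (matvec (Amat z) (xh t) i + h (xh t) i).
Hypothesis Hinit : forall i, (i < 4)%nat -> xh t1 i = y t1 i.
Hypothesis He : forall t, t1 <= t <= tau -> vsq (e t) <= eps.

Let eps_nonneg : 0 <= eps.
Proof. eapply Rle_trans; [apply vsq_nonneg | apply (He t1); lra]. Qed.

(* Clamping extends the solutions constantly outside [t1, tau], so that their
   one-sided continuity at the endpoints becomes genuine continuity. *)
Let dist (s : R) : vec := vsub (y (clamp t1 tau s)) (xh (clamp t1 tau s)).

Let dist_deriv (s : R) : vec :=
  fun i => matvec (Amat z) (dist s) i + (h (y s) i - h (xh s) i) + e s i.

Lemma dist_id (s : R) : t1 <= s <= tau -> dist s = vsub (y s) (xh s).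
Proof. intros Hs; unfold dist; rewrite clamp_id by exact Hs; reflexivity. Qed.

Lemma continuity_pt_lyap_dist (c : R) : continuity_pt (fun s => lyap z (dist s)) c.
Proof.
  apply continuity_pt_lyap; intros i Hi; unfold dist, vsub.
  apply continuity_pt_minus;
    [apply (continuity_pt_clamp_comp (fun s => y s i)) | apply (continuity_pt_clamp_comp (fun s => xh s i))];
    auto.
Qed.

Lemma derivable_pt_lim_lyap_dist (s : R) : t1 < s < tau ->
  derivable_pt_lim (fun s => lyap z (dist s)) s (lyap_deriv z (dist s) (dist_deriv s)).
Proof.
  intros Hs; apply derivable_pt_lim_lyap; intros i Hi.
  unfold dist_deriv; rewrite dist_id by lra.
  replace (matvec (Amat z) (vsub (y s) (xh s)) i + (h (y s) i - h (xh s) i) + e s i)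
    with ((matvec (Amat z) (y s) i + h (y s) i + e s i)
          - (matvec (Amat z) (xh s) i + h (xh s) i))
    by (rewrite <- matvec_vsub; ring).
  unfold dist, vsub.
  apply derivable_pt_lim_minus;
    [apply (derivable_pt_lim_clamp_comp (fun s => y s i)) | apply (derivable_pt_lim_clamp_comp (fun s => xh s i))];
    auto.
Qed.

Lemma lyap_deriv_dist_le (s : R) : t1 < s < tau ->
  lyap_deriv z (dist s) (dist_deriv s) <= lyap_rate Lh * lyap z (dist s) + 8 * eps.
Proof.
  intros Hs; unfold dist_deriv; rewrite dist_id by lra.
  assert (He_s := He s ltac:(lra)).
  enough (lyap_deriv z (vsub (y s) (xh s))
            (fun i => matvec (Amat z) (vsub (y s) (xh s)) i + (h (y s) i - h (xh s) i) + e s i)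
          <= lyap_rate Lh * lyap z (vsub (y s) (xh s)) + 8 * vsq (e s)) by lra.
  apply lyap_deriv_le; [exact Hz | exact HLh |].
  intros i Hi; rewrite Hh by exact Hi.
  apply Rabs_matvec_le; intros j Hj; apply HLmat; assumption.
Qed.

Lemma lyap_dist_le (t : R) : t1 <= t <= tau ->
  lyap z (vsub (y t) (xh t)) <= 8 * eps / lyap_rate Lh * exp (lyap_rate Lh * (t - t1)).
Proof.
  intros Ht.
  pose proof (lyap_rate_pos Lh HLh) as Hrate; pose proof eps_nonneg.
  assert (Hstart : lyap z (dist t1) = 0).
  { rewrite dist_id by lra; unfold lyap, ell, vsub; rewrite !Hinit by lia; ring. }
  pose proof (gronwall_linear _ _ t1 tau _ _ Hrate
    (fun c _ => continuity_pt_lyap_dist c) derivable_pt_lim_lyap_dist lyap_deriv_dist_le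
    t Ht) as Hgronwall.
  cbv beta in Hgronwall; rewrite Hstart, dist_id in Hgronwall by exact Ht.
  assert (0 <= 8 * eps / lyap_rate Lh) by (apply Rle_mult_inv_pos; lra).
  unfold Rdiv in *; lra.
Qed.

Lemma vsq_dist_le (t : R) : t1 <= t <= tau ->
  vsq (vsub (y t) (xh t)) <= 96 * eps / lyap_rate Lh * exp (lyap_rate Lh * (tau - t1)).
Proof.
  intros Ht.
  pose proof (lyap_rate_pos Lh HLh) as Hrate; pose proof eps_nonneg.
  assert (Hexp : exp (lyap_rate Lh * (t - t1)) <= exp (lyap_rate Lh * (tau - t1)))
    by (apply exp_le_compat, Rmult_le_compat_l; lra).
  pose proof (vsq_le_lyap z (vsub (y t) (xh t)) Hz).
  pose proof (lyap_dist_le t Ht).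
  assert (0 <= 8 * eps / lyap_rate Lh) by (apply Rle_mult_inv_pos; lra).
  unfold Rdiv in *; nra.
Qed.

End ErrorEstimate.

Theorem mainTheorem10
  (t1 tau : R) (h : vec -> vec) (Lmat : vec -> vec -> mat) (Lh : R)
  (y xh e : R -> R -> vec) :
  t1 < tau ->
  0 < Lh ->
  (forall a b i j, (i < 4)%nat -> (j < 4)%nat -> Rabs (Lmat a b i j) <= Lh) ->
  (forall a b i, (i < 4)%nat ->
      h a i - h b i = matvec (Lmat a b) (vsub a b) i) ->
  (forall z, 0 < z -> forall i, (i < 4)%nat ->
      cont_on (fun s => y z s i) t1 tau /\ cont_on (fun s => xh z s i) t1 tau) ->
  (forall z, 0 < z -> forall t, t1 < t < tau -> forall i, (i < 4)%nat ->
      derivable_pt_lim (fun s => y z s i) t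
        (matvec (Amat z) (y z t) i + h (y z t) i + e z t i)) ->
  (forall z, 0 < z -> forall t, t1 < t < tau -> forall i, (i < 4)%nat ->
      derivable_pt_lim (fun s => xh z s i) t
        (matvec (Amat z) (xh z t) i + h (xh z t) i)) ->
  (forall z, 0 < z -> forall i, (i < 4)%nat -> xh z t1 i = y z t1 i) ->
  (exists K Z0, forall z, Z0 <= z -> 0 < z -> forall t, t1 <= t <= tau ->
      vnorm (e z t) <= K / z) ->
  exists K Z0, forall z, Z0 <= z -> 0 < z -> forall t, t1 <= t <= tau ->
      vnorm (vsub (y z t) (xh z t)) <= K / z.
Proof.
  intros Htau HLh HLmat Hh Hcont Hy_ode Hxh_ode Hinit (K & Z0 & He).
  set (al := lyap_rate Lh); set (K' := Rmax K 0).
  pose proof (lyap_rate_pos Lh (Rlt_le _ _ HLh)) as Hal; fold al in Hal.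
  set (C := sqrt (96 * exp (al * (tau - t1)) / al)).
  assert (HC : C ^ 2 = 96 * exp (al * (tau - t1)) / al)
    by (apply pow2_sqrt, Rle_mult_inv_pos; [pose proof (exp_pos (al * (tau - t1))); lra | exact Hal]).
  exists (K' * C), (Rmax Z0 1); intros z Hz Hzpos t Ht.
  assert (Hz1 : 1 <= z) by (pose proof (Rmax_r Z0 1); lra).
  assert (He' : forall s, t1 <= s <= tau -> vsq (e z s) <= (K' / z) ^ 2).
  { intros s Hs; apply vsq_le_of_vnorm_le; eapply Rle_trans.
    - apply He; [pose proof (Rmax_l Z0 1); lra | exact Hzpos | exact Hs].
    - apply Rmult_le_compat_r; [apply Rlt_le, Rinv_0_lt_compat, Hzpos | apply Rmax_l]. }
  pose proof (vsq_dist_le z t1 tau Lh _ h Lmat (y z) (xh z) (e z) Hz1 (Rlt_le _ _ Htau)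
    (Rlt_le _ _ HLh) HLmat Hh (fun i Hi => proj1 (Hcont z Hzpos i Hi))
    (fun i Hi => proj2 (Hcont z Hzpos i Hi)) (Hy_ode z Hzpos) (Hxh_ode z Hzpos)
    (Hinit z Hzpos) He' t Ht) as Hdist.
  apply vnorm_le_of_vsq_le.
  - apply Rle_mult_inv_pos; [apply Rmult_le_pos; [apply Rmax_r | apply sqrt_pos] | lra].
  - replace ((K' * C / z) ^ 2) with ((K' / z) ^ 2 * C ^ 2) by (field; lra).
    rewrite HC; fold al in Hdist.
    replace ((K' / z) ^ 2 * (96 * exp (al * (tau - t1)) / al))
      with (96 * (K' / z) ^ 2 / al * exp (al * (tau - t1))) by (field; lra).
    exact Hdist.
Qed.
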